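(* Let $W,M$ be disjoint with $|W|=|M|=n$ and let $\mu$ be a fixed perfect marriage between $W$ and $M$. The randomized two-party communication complexity of determining whether $\mu$ is stable with respect to $\succ_W,\succ_M$, where Alice holds the women's full preference profile $\succ_W$ and Bob holds the men's full preference profile $\succ_M$, is $\Omega(n^2)$.
   Context: A full preference profile of the women gives each woman a total order on $M$; that of the men gives each man a total order on $W$. A perfect marriage is a bijection between $W$ and $M$. A pair $(w,m)$ is blocking for $\mu$ if $w$ prefers $m$ to her spouse in $\mu$ and $m$ prefers $w$ to his spouse in $\mu$; $\mu$ is stable if it has no blocking pair. In two-party communication complexity, the cost of a protocol is the number of bits exchanged in the worst case; a randomized protocol must answer correctly with probability at least $2/3$ on every input; the complexity is the least cost of such a protocol. The bound is asymptotic in $n$. *)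

From HB Require Import structures.
From mathcomp Require Import all_boot all_order all_algebra all_fingroup.
From mathcomp Require Import reals.
Set Implicit Arguments. Unset Strict Implicit. Unset Printing Implicit Defensive.
Import Order.TTheory GRing.Theory Num.Theory.

(* Women and men are two disjoint copies of 'I_n.  A preference order of one
   agent on the n agents of the other side is a ranking, i.e. a permutation
   [r : {perm 'I_n}]; the agent prefers [a] to [b] iff [r a < r b]
   (rank 0 = most preferred).  This is exactly a total order on 'I_n. *)
Definition ranking n := {perm 'I_n}.
Definition prefers n (r : ranking n) (a b : 'I_n) : bool := r a < r b.

Definition women_profile n := {ffun 'I_n -> ranking n}. (* woman -> order on men *)
Definition men_profile n := {ffun 'I_n -> ranking n}.   (* man -> order on women *)

(* a perfect marriage: bijection woman |-> her husband *)
Definition marriage n := {perm 'I_n}.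

Definition blocking n (mu : marriage n) (PW : women_profile n) (PM : men_profile n)
  (w m : 'I_n) : bool :=
  prefers (PW w) m (mu w) && prefers (PM m) w ((mu^-1)%g m).

Definition stable n (mu : marriage n) (PW : women_profile n) (PM : men_profile n) : bool :=
  [forall w, forall m, ~~ blocking mu PW PM w m].

(* A deterministic protocol tree: at an Alice node Alice sends a bit that is a
   function of her input x, at a Bob node Bob sends a bit depending on y;
   the history is encoded by the position in the tree; leaves output. *)
Inductive protocol (X Y : Type) : Type :=
| PLeaf of bool
| PAlice of (X -> bool) & protocol X Y & protocol X Y
| PBob of (Y -> bool) & protocol X Y & protocol X Y.
Arguments PLeaf {X Y}.

Fixpoint run X Y (p : protocol X Y) (x : X) (y : Y) : bool :=
  match p with
  | PLeaf b => b
  | PAlice f p0 p1 => if f x then run p1 x y else run p0 x y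
  | PBob g p0 p1 => if g y then run p1 x y else run p0 x y
  end.

Fixpoint depth X Y (p : protocol X Y) : nat :=
  match p with
  | PLeaf _ => 0
  | PAlice _ p0 p1 => (maxn (depth p0) (depth p1)).+1
  | PBob _ p0 p1 => (maxn (depth p0) (depth p1)).+1
  end.

(* A (public-coin) randomized protocol: a finitely supported probability
   distribution over deterministic protocols, given as a list of
   (probability, protocol) pairs. *)
Definition rprotocol (R : realType) X Y := seq (R * protocol X Y).

Definition is_distribution (R : realType) X Y (P : rprotocol R X Y) : Prop :=
  all (fun q => 0 <= q.1)%R P /\ (\sum_(q <- P) q.1 = 1)%R.

(* cost = worst-case number of bits over all coin outcomes and inputs *)
Definition rcost (R : realType) X Y (P : rprotocol R X Y) : nat :=
  \max_(q <- P) depth q.2.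

Definition success_prob (R : realType) X Y (P : rprotocol R X Y)
  (f : X -> Y -> bool) (x : X) (y : Y) : R :=
  (\sum_(q <- P | run q.2 x y == f x y) q.1)%R.

Definition rcomputes (R : realType) X Y (P : rprotocol R X Y) (f : X -> Y -> bool) : Prop :=
  is_distribution P /\ forall x y, (2 / 3 <= success_prob P f x y)%R.

(* Reduction from set disjointness.  Enumerate the n(n-1) pairs (w, m) in which m is
   not the husband of w.  A set x of such pairs becomes a women's profile in which every
   woman ranks first the men paired with her in x, then her husband, then everybody else;
   a set y becomes a men's profile in the same way.  A pair then blocks mu iff it lies
   in both x and y, so mu is stable iff x and y are disjoint.

   Disjointness on a ground set of size 4l - 1 needs Omega(l) bits (Razborov).  Split the
   ground set into disjoint halves A, B of size 2l - 1 and one left-over point; the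
   distribution mu0 draws l-subsets of A and of B, and mu1 draws l-subsets of the
   complements of B and of A that contain the left-over point.  Every rectangle F x G has
   mu1-mass at least 729/1210 of its mu0-mass up to an error of order 4^l (19/20)^15k /
   (9/10)^7k: conditioning on B, a side where F is rarely hit by the left-over point is
   only possible when the l-sets of F avoid 15k points unusually often, and such families
   are exponentially small.  A protocol of depth d splits the inputs into 2^d rectangles,
   so being correct with probability 2/3 on both distributions forces 2^d times the
   error to be a constant fraction of the total mass, whence d = Omega(l) = Omega(n^2). *)

From HB Require Import structures.
From mathcomp Require Import all_boot all_order all_algebra all_fingroup.
From mathcomp Require Import reals.
From mathcomp Require Import ring lra zify.
Set Implicit Arguments. Unset Strict Implicit. Unset Printing Implicit Defensive.
Import Order.TTheory GRing.Theory Num.Theory.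
Local Open Scope ring_scope.

Lemma natr_card_sep (R : pzSemiRingType) (T : finType) (A : {set T}) (P : pred T) :
  #|[set x in A | P x]|%:R = \sum_(x in A) (P x)%:R :> R.
Proof.
rewrite -sum1_card natr_sum [LHS]big_mkcond [RHS]big_mkcond /=.
by apply: eq_bigr => x _; rewrite inE; case: (x \in A); case: (P x).
Qed.

Lemma sumr1_card (R : pzSemiRingType) (T : finType) (P : pred T) :
  \sum_(x | P x) (1 : R) = #|[set x | P x]|%:R.
Proof. by rewrite -sumr_const; apply: eq_bigl => x; rewrite inE. Qed.

Lemma exchange_big_rel (R : nmodType) (T : finType) (P : rel T) (F : T -> T -> R) :
  \sum_a \sum_(b | P a b) F a b = \sum_b \sum_(a | P a b) F a b.
Proof. exact: (exchange_big_dep xpredT). Qed.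

Lemma exists_subset_of_card (T : finType) (A : {set T}) (k : nat) :
  (k <= #|A|)%N -> exists2 B : {set T}, B \subset A & #|B| = k.
Proof.
elim: k => [|k IHk] lekA; first by exists set0; rewrite ?sub0set ?cards0.
have [B BA cardB] := IHk (ltnW lekA).
have : (0 < #|A :\: B|)%N by rewrite cardsD (setIidPr BA) cardB subn_gt0.
case/card_gt0P => x; rewrite inE => /andP[xNB xA].
exists (x |: B); first by rewrite subUset sub1set xA BA.
by rewrite cardsU1 xNB cardB.
Qed.

Lemma sum_subsets_pow_cardI (R : comPzSemiRingType) (T : finType) (U J : {set T}) (a : R) :
  J \subset U ->
  \sum_(x : {set T} | x \subset U) a ^+ #|x :&: J| = (1 + a) ^+ #|J| * 2 ^+ (#|U| - #|J|).
Proof.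
move=> JU.
pose F i := if i \in J then a else if i \in U then 1 else 0 : R.
have termE (x : {set T}) : \prod_i (if i \in x then F i else 1) =
    if x \subset U then a ^+ #|x :&: J| else 0.
  rewrite -big_mkcond /=; case: ifP => xU.
    rewrite (bigID (mem J)) /= [X in _ * X]big1 ?mulr1; last first.
      by move=> i /andP[ix iNJ]; rewrite /F (negbTE iNJ) (subsetP xU i ix).
    rewrite (eq_bigr (fun _ => a)); last by move=> i /andP[_ iJ]; rewrite /F iJ.
    rewrite (eq_bigl (fun i => i \in x :&: J)) ?prodr_const // => i; by rewrite inE.
  have /subsetPn[i ix iNU] : ~~ (x \subset U) by rewrite xU.
  rewrite (bigD1 i) //= /F (negbTE iNU).
  by rewrite (contraNF (subsetP JU i)) // mul0r.
have prodE : \prod_i (F i + 1) = (1 + a) ^+ #|J| * 2 ^+ (#|U| - #|J|).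
  rewrite (bigID (mem J)) /=.
  rewrite (eq_bigr (fun _ => 1 + a)); last by move=> i iJ; rewrite /F iJ addrC.
  rewrite prodr_const; congr (_ * _).
  rewrite (bigID (mem U)) /= [X in _ * X]big1 ?mulr1; last first.
    by move=> i /andP[iNJ iNU]; rewrite /F (negbTE iNJ) (negbTE iNU) add0r.
  rewrite (eq_big (mem (U :\: J)) (fun _ => 2)) ?prodr_const ?cardsD ?(setIidPr JU) //.
    by move=> i; rewrite !inE andbC.
  by move=> i /andP[iNJ iU]; rewrite /F (negbTE iNJ) iU.
rewrite -prodE bigA_distr [LHS]big_mkcond /=.
by apply: eq_bigr => x _; rewrite termE.
Qed.

Lemma sum_setD1 (R : nmodType) (T : finType) (U : {set T}) (g : {set T} -> R) :
  (0 < #|U|)%N ->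
  \sum_(P : {set T} | (#|P| == #|U|.-1) && (P \subset U)) g P = \sum_(i in U) g (U :\ i).
Proof.
move=> U0.
have inj : {in U &, injective (fun i => U :\ i)}.
  move=> i j iU jU /= eUij; apply: contraTeq isT => ij.
  have : i \in U :\ j by rewrite !inE ij iU.
  by rewrite -eUij !inE eqxx.
rewrite -(big_imset g inj) /=; apply: eq_bigl => P; apply/andP/imsetP.
  case=> /eqP cardP PU.
  have : #|U :\: P| == 1%N by rewrite cardsD (setIidPr PU) cardP; apply/eqP; lia.
  case/cards1P => i eUP; exists i.
    have : i \in U :\: P by rewrite eUP set11.
    by rewrite inE => /andP[].
  apply/setP => j; rewrite !inE.
  have := congr1 (fun X : {set T} => j \in X) eUP; rewrite !inE.
  by case: (j \in P) (subsetP PU j) => [-> // | _]; case: (j \in U) => //= <-.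
case=> i iU ->; split; last exact: subsetDl.
by rewrite (cardsD1 i U) iU.
Qed.

Lemma leq_bin_central l i : ('C(2 * l, i) <= 'C(2 * l, l))%N.
Proof.
have below j : (j <= l)%N -> ('C(2 * l, l - j) <= 'C(2 * l, l))%N.
  elim: j => [|j IHj] lejl; first by rewrite subn0.
  apply: leq_trans (IHj (ltnW lejl)).
  have -> : (l - j = (l - j.+1).+1)%N by lia.
  rewrite -(@leq_pmul2l (l - j.+1).+1) // mul_bin_left leq_mul //; lia.
case: (leqP i l) => [leil | ltli].
  by have := below (l - i)%N (leq_subr _ _); rewrite subKn.
case: (leqP i (2 * l)) => [lei2l | lt2li]; last by rewrite bin_small.
rewrite -bin_sub // (_ : (2 * l - i = l - (i - l))%N); last by lia.
by apply: below; lia.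
Qed.

Lemma exp4_leq_bin_central l : (4 ^ l <= (2 * l).+1 * 'C(2 * l, l))%N.
Proof.
have -> : (4 ^ l = (1 + 1) ^ (2 * l))%N by rewrite expnM.
rewrite expnDn.
apply: leq_trans (_ : \sum_(i < (2 * l).+1) 'C(2 * l, l) <= _)%N.
  by apply: leq_sum => i _; rewrite !exp1n !muln1 leq_bin_central.
by rewrite sum_nat_const card_ord.
Qed.

Lemma bin_predn_double l : (0 < l)%N -> ('C((2 * l).-1, l) * 2 = 'C(2 * l, l))%N.
Proof.
move=> l_gt0.
have e2l : (2 * l = ((2 * l).-1).+1)%N by lia.
have el : (l = (l.-1).+1)%N by lia.
rewrite [in RHS]e2l [in RHS]el binS -el.
have -> : 'C((2 * l).-1, l.-1) = 'C((2 * l).-1, l).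
  by rewrite -bin_sub; [congr 'C(_, _) | ]; lia.
by rewrite muln2 addnn.
Qed.

Lemma prod_le_unskewed (R : realFieldType) (a0 a1 b0 b1 : R) :
  0 <= a0 -> 0 <= a1 -> 0 <= b0 -> 0 <= b1 ->
  81 * (a0 * b0) <= 121 * (a1 * b1) +
    81 * ((if 20 * a1 < 9 * (a0 + a1) then a0 * b0 else 0) +
          (if 20 * b1 < 9 * (b0 + b1) then b0 * a0 else 0)).
Proof.
move=> a0_ge0 a1_ge0 b0_ge0 b1_ge0.
have : 0 <= a1 * b1 by apply: mulr_ge0.
have : 0 <= a0 * b0 by apply: mulr_ge0.
by case: ltP => skewA; case: ltP => skewB; nra.
Qed.

Section RareFamily.
Variables (R : realFieldType) (T : finType) (U J : {set T}) (S : {set {set T}}) (k : nat).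
Hypotheses (JU : J \subset U) (cardJ : #|J| = (15 * k)%N) (k_gt0 : (0 < k)%N).
Hypothesis rare : forall i, i \in J -> 20 * #|[set x in S | i \in x]|%:R < 9 * #|S|%:R :> R.

Let thin : R := \sum_(x in S | (#|x :&: J| < 7 * k)%N) 1.

Lemma sum_card_setI_family :
  \sum_(i in J) #|[set x in S | i \in x]|%:R = \sum_(x in S) #|x :&: J|%:R :> R.
Proof.
under eq_bigr do rewrite natr_card_sep.
rewrite exchange_big /=; apply: eq_bigr => x _.
rewrite (_ : x :&: J = [set i in J | i \in x]) ?natr_card_sep //.
by apply/setP => i; rewrite !inE andbC.
Qed.

Lemma card_family_le_thin : #|S|%:R <= 28 * thin.
Proof.
have meanJ : 20 * \sum_(x in S) #|x :&: J|%:R <= 9 * (15 * k)%:R * #|S|%:R :> R.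
  rewrite -sum_card_setI_family mulr_sumr.
  apply: (@le_trans _ _ (\sum_(i in J) (9 * #|S|%:R))).
    by apply: ler_sum => i iJ; apply/ltW/rare.
  by rewrite sumr_const cardJ -(mulr_natr (9 * _)); lra.
have markov : (7 * k)%:R * (#|S|%:R - thin) <= \sum_(x in S) #|x :&: J|%:R :> R.
  have -> : #|S|%:R - thin = \sum_(x in S | ~~ (#|x :&: J| < 7 * k)%N) 1.
    by rewrite /thin -sumr_const (bigID (fun x => (#|x :&: J| < 7 * k)%N)) /= addrC addrK.
  rewrite mulr_sumr [X in _ <= X](bigID (fun x => (#|x :&: J| < 7 * k)%N)) /=.
  rewrite -[X in X <= _]add0r; apply: lerD; first by apply: sumr_ge0 => x _.
  by apply: ler_sum => x /andP[_]; rewrite -leqNgt mulr1 ler_nat.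
have kR : (0 : R) < k%:R by rewrite ltr0n.
move: meanJ markov; rewrite !natrM => meanJ markov.
have : (20 * 7) * k%:R * (#|S|%:R - thin) <= 135 * k%:R * #|S|%:R by nra.
by move=> h; nra.
Qed.

Lemma thin_le (l : nat) : #|U| = (2 * l)%N ->
  (forall x, x \in S -> x \subset U) ->
  thin * (9/10) ^+ (7 * k) <= 4 ^+ l * (19/20) ^+ (15 * k).
Proof.
move=> cardU SU.
have lekl : (15 * k <= 2 * l)%N by rewrite -cardJ -cardU subset_leq_card.
have <- : (1 + 9/10) ^+ #|J| * 2 ^+ (#|U| - #|J|) = 4 ^+ l * (19/20) ^+ (15 * k) :> R.
  rewrite cardJ cardU (_ : 1 + 9/10 = 19/20 * 2 :> R); last by lra.
  rewrite exprMn -mulrA -exprD subnKC // mulrC; congr (_ * _).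
  by rewrite exprM expr2; congr (_ ^+ _); lra.
rewrite -sum_subsets_pow_cardI // /thin mulr_suml.
apply: (@le_trans _ _ (\sum_(x in S | (#|x :&: J| < 7 * k)%N) (9/10 : R) ^+ #|x :&: J|)).
  apply: ler_sum => x /andP[_ ltxJ]; rewrite mul1r.
  by apply: ler_wiXn2l; [lra | lra | exact: ltnW].
rewrite [X in X <= _]big_mkcond [X in _ <= X]big_mkcond /=.
apply: ler_sum => x _; case: ifP => [/andP[xS _]|_]; first by rewrite (SU x xS).
by case: ifP => _ //; apply: exprn_ge0; lra.
Qed.

Lemma card_rare_family_le (l : nat) : #|U| = (2 * l)%N ->
  (forall x, x \in S -> x \subset U) ->
  #|S|%:R * (9/10) ^+ (7 * k) <= 28 * 4 ^+ l * (19/20) ^+ (15 * k) :> R.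
Proof.
move=> cardU SU.
have pow0 : (0 : R) <= (9/10) ^+ (7 * k) by apply: exprn_ge0; lra.
apply: (@le_trans _ _ (28 * thin * (9/10) ^+ (7 * k))).
  by apply: ler_wpM2r => //; apply: card_family_le_thin.
by rewrite -!mulrA ler_wpM2l ?thin_le //; lra.
Qed.

End RareFamily.

(* Razborov's distributions, kept unnormalised: [expect] and [mass] are sums over all
   admissible triples (A, B, x, y), each pair of halves counted once.  Since ~: B is A
   plus the left-over point, a [straddle] set is one that contains that point. *)
Definition halves (T : finType) (l : nat) (A B : {set T}) : bool :=
  [&& #|A| == (2 * l).-1, #|B| == (2 * l).-1 & [disjoint A & B]].

Definition inside (T : finType) (l : nat) (A x : {set T}) : bool :=
  (x \subset A) && (#|x| == l).

Definition straddle (T : finType) (l : nat) (A B x : {set T}) : bool :=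
  [&& x \subset ~: B, #|x| == l & ~~ (x \subset A)].

Definition input (T : finType) (l : nat) (e : bool) (A B x : {set T}) : bool :=
  if e then straddle l A B x else inside l A x.

Definition hsum (R : nmodType) (T : finType) (l : nat) (f : {set T} -> {set T} -> R) : R :=
  \sum_A \sum_(B | halves l A B) f A B.

Definition weight (R : pzSemiRingType) (T : finType) (l : nat) (e : bool)
    (F : pred {set T}) (A B : {set T}) : R :=
  \sum_(x | input l e A B x && F x) 1.

Definition expect (R : nmodType) (T : finType) (l : nat) (e : bool)
    (h : {set T} -> {set T} -> R) : R :=
  hsum l (fun A B => \sum_(x | input l e A B x) \sum_(y | input l e B A y) h x y).

Definition mass (R : pzSemiRingType) (T : finType) (l : nat) (e : bool) (E : rel {set T}) : R :=
  expect l e (fun x y => (E x y)%:R).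

Definition skewed (R : numDomainType) (T : finType) (l : nat) (F : pred {set T})
    (A B : {set T}) : bool :=
  20 * weight R l true F A B < 9 * (weight R l false F A B + weight R l true F A B).

Definition total_mass (R : pzSemiRingType) (T : finType) (l : nat) : R :=
  \sum_(B : {set T} | #|B| == (2 * l).-1)
    (2 * l)%:R * ('C((2 * l).-1, l)%:R * 'C((2 * l).-1, l)%:R).

Definition decay (R : fieldType) (k : nat) : R := (19/20) ^+ (15 * k) / (9/10) ^+ (7 * k).

Definition skew_bound (R : fieldType) (l k : nat) : R := 28 * 4 ^+ l * decay R k.

Section HalvesSum.
Variables (T : finType) (l : nat).

Lemma halves_sym (A B : {set T}) : halves l A B = halves l B A.
Proof. by rewrite /halves disjoint_sym; case: (#|A| == _); case: (#|B| == _). Qed.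

Lemma eq_hsum (R : nmodType) (f g : {set T} -> {set T} -> R) :
  (forall A B, f A B = g A B) -> hsum l f = hsum l g.
Proof. by move=> fg; apply: eq_bigr => A _; apply: eq_bigr => B _. Qed.

Lemma hsumD (R : nmodType) (f g : {set T} -> {set T} -> R) :
  hsum l (fun A B => f A B + g A B) = hsum l f + hsum l g.
Proof. by rewrite /hsum -big_split; apply: eq_bigr => A _; rewrite -big_split. Qed.

Lemma hsumZ (R : pzSemiRingType) (a : R) (f : {set T} -> {set T} -> R) :
  hsum l (fun A B => a * f A B) = a * hsum l f.
Proof. by rewrite /hsum mulr_sumr; apply: eq_bigr => A _; rewrite mulr_sumr. Qed.

Lemma hsum_swap (R : nmodType) (f : {set T} -> {set T} -> R) :
  hsum l f = hsum l (fun A B => f B A).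
Proof.
rewrite /hsum exchange_big_rel; apply: eq_bigr => B _.
by apply: eq_bigl => A; rewrite halves_sym.
Qed.

Lemma ler_hsum (R : numDomainType) (f g : {set T} -> {set T} -> R) :
  (forall A B, halves l A B -> f A B <= g A B) -> hsum l f <= hsum l g.
Proof. by move=> fg; apply: ler_sum => A _; apply: ler_sum => B; apply: fg. Qed.

Lemma hsum_ge0 (R : numDomainType) (f : {set T} -> {set T} -> R) :
  (forall A B, halves l A B -> 0 <= f A B) -> 0 <= hsum l f.
Proof. by move=> f0; apply: sumr_ge0 => A _; apply: sumr_ge0 => B; apply: f0. Qed.

Lemma weight_ge0 (R : numDomainType) e (F : pred {set T}) (A B : {set T}) :
  0 <= weight R l e F A B.
Proof. exact: sumr_ge0. Qed.

Lemma weight0_le (R : numDomainType) (F : pred {set T}) (A B : {set T}) :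
  weight R l false F A B <= 'C(#|A|, l)%:R.
Proof.
rewrite /weight sumr1_card -cards_draws ler_nat; apply: subset_leq_card.
by apply/subsetP => x; rewrite !inE /input /inside => /andP[/andP[-> ->]].
Qed.

Lemma weight0T (R : pzSemiRingType) (A B : {set T}) :
  weight R l false xpredT A B = 'C(#|A|, l)%:R.
Proof.
rewrite /weight sumr1_card -cards_draws; congr (_%:R); apply: eq_card => x.
by rewrite !inE /input /inside andbT.
Qed.

Lemma mass_rect (R : pzSemiRingType) e (F G : pred {set T}) :
  mass R l e (fun x y => F x && G y) =
  hsum l (fun A B => weight R l e F A B * weight R l e G B A).
Proof.
apply: eq_bigr => A _; apply: eq_bigr => B _.
rewrite /weight big_distrlr /= [RHS]big_mkcondr /=; apply: eq_bigr => x _.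
case: (F x) => /=; last by rewrite big1.
rewrite [RHS]big_mkcondr /=; apply: eq_bigr => y _.
by case: (G y); rewrite /= ?mulr1.
Qed.

Lemma eq_mass (R : pzSemiRingType) e (E E' : rel {set T}) :
  (forall A B x y, halves l A B -> input l e A B x -> input l e B A y -> E x y = E' x y) ->
  mass R l e E = mass R l e E'.
Proof.
move=> EE'; apply: eq_bigr => A _; apply: eq_bigr => B hAB; apply: eq_bigr => x xA.
by apply: eq_bigr => y yB; rewrite (EE' A B x y).
Qed.

Lemma mass_split (R : pzSemiRingType) e (E C : rel {set T}) :
  mass R l e E = mass R l e (fun x y => E x y && C x y) + mass R l e (fun x y => E x y && ~~ C x y).
Proof.
rewrite /mass /expect -hsumD; apply: eq_bigr => A _; apply: eq_bigr => B _.
rewrite -big_split; apply: eq_bigr => x _; rewrite -big_split; apply: eq_bigr => y _ /=.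
by case: (E x y); case: (C x y); rewrite /= ?addr0 ?add0r.
Qed.

Lemma mass0 (R : pzSemiRingType) e : mass R l e (fun _ _ : {set T} => false) = 0.
Proof.
rewrite /mass /expect /hsum big1 // => A _; rewrite big1 // => B _.
by rewrite big1 // => x _; rewrite big1.
Qed.

Lemma mass_ge0 (R : numDomainType) e (E : rel {set T}) : 0 <= mass R l e E.
Proof.
by apply: hsum_ge0 => A B _; apply: sumr_ge0 => x _; apply: sumr_ge0 => y _; apply: ler0n.
Qed.

Lemma expect_const (R : pzSemiRingType) e (a : R) :
  expect l e (fun _ _ : {set T} => a) = a * mass R l e (fun _ _ : {set T} => true).
Proof.
rewrite /mass /expect -hsumZ; apply: eq_bigr => A _; apply: eq_bigr => B _.
rewrite mulr_sumr; apply: eq_bigr => x _; rewrite mulr_sumr; apply: eq_bigr => y _.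
by rewrite mulr1.
Qed.

Lemma ler_expect (R : numDomainType) e (h h' : {set T} -> {set T} -> R) :
  (forall x y, h x y <= h' x y) -> expect l e h <= expect l e h'.
Proof.
move=> hh'; apply: ler_hsum => A B _; apply: ler_sum => x _.
by apply: ler_sum => y _.
Qed.

Lemma expect_sum (R : pzSemiRingType) (I : Type) e (s : seq I) (w : I -> R)
  (h : I -> {set T} -> {set T} -> R) :
  \sum_(i <- s) w i * expect l e (h i) = expect l e (fun x y => \sum_(i <- s) w i * h i x y).
Proof.
rewrite /expect /hsum; under eq_bigr do rewrite mulr_sumr.
rewrite exchange_big; apply: eq_bigr => A _.
under eq_bigr do rewrite mulr_sumr.
rewrite exchange_big; apply: eq_bigr => B _.
under eq_bigr do rewrite mulr_sumr.
rewrite exchange_big; apply: eq_bigr => x _.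
under eq_bigr do rewrite mulr_sumr.
by rewrite exchange_big.
Qed.

End HalvesSum.

Section Distribution.
Variables (R : realFieldType) (V : finType) (l : nat).
Hypotheses (l_gt0 : (0 < l)%N) (cardV : #|V| = (4 * l).-1).

Local Notation l2 := ((2 * l).-1).
Local Notation c := ('C((2 * l).-1, l)%:R : R).

Lemma card_setC_half (Q : {set V}) : #|Q| = l2 -> #|~: Q| = (2 * l)%N.
Proof. by move=> cardQ; rewrite cardsCs setCK cardV cardQ; lia. Qed.

Lemma halves_card (A B : {set V}) : halves l A B -> #|A| = l2 /\ #|B| = l2.
Proof. by case/and3P => /eqP -> /eqP ->. Qed.

Lemma weight1T (A B : {set V}) : halves l A B -> weight R l true xpredT A B = c.
Proof.
case/and3P => /eqP cardA /eqP cardB; rewrite disjoints_subset => AB.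
set D1 := [set x : {set V} | x \subset ~: B & #|x| == l].
set D2 := [set x : {set V} | x \subset A & #|x| == l].
have D21 : D2 \subset D1.
  by apply/subsetP => x; rewrite !inE => /andP[xA ->]; rewrite (subset_trans xA AB).
have -> : weight R l true xpredT A B = #|D1 :\: D2|%:R.
  rewrite /weight sumr1_card; congr (_%:R); apply: eq_card => x.
  rewrite !inE /input /straddle andbT.
  by case: (x \subset ~: B); case: (x \subset A); case: (#|x| == l).
rewrite cardsD (setIidPr D21) /D1 /D2 !cards_draws (card_setC_half cardB) cardA.
by rewrite -(bin_predn_double l_gt0); congr (_%:R); lia.
Qed.

Lemma card_halves_partner (B : {set V}) :
  #|B| = l2 -> #|[set A : {set V} | halves l A B]| = (2 * l)%N.
Proof.
move=> cardB.
rewrite (_ : [set A | halves l A B] = [set A : {set V} | A \subset ~: B & #|A| == l2]).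
  rewrite cards_draws (card_setC_half cardB) (_ : (2 * l = l2.+1)%N) ?binSn //; lia.
apply/setP => A; rewrite !inE /halves cardB eqxx disjoints_subset.
by case: (_ \subset _); case: (#|A| == _).
Qed.

Lemma hsum_const (a : R) :
  hsum l (fun _ _ : {set V} => a) = \sum_(B : {set V} | #|B| == l2) (2 * l)%:R * a.
Proof.
rewrite /hsum exchange_big_rel (bigID (fun B : {set V} => #|B| == l2)) /=.
rewrite [X in _ + X]big1 ?addr0 => [|B cardB]; last first.
  by rewrite big_pred0 // => A; apply/negbTE; apply: contra cardB => /halves_card[_ ->].
apply: eq_bigr => B /eqP cardB.
rewrite -(card_halves_partner cardB) sumr_const mulr_natl.
by congr (_ *+ _); apply: eq_card => A; rewrite inE.
Qed.

Lemma massT e :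
  mass R l e (fun _ _ : {set V} => true) = total_mass R V l.
Proof.
rewrite /total_mass -hsum_const (@mass_rect _ l R e xpredT xpredT).
apply: eq_bigr => A _; apply: eq_bigr => B hAB.
case: e; first by rewrite !weight1T // halves_sym.
by rewrite !weight0T; case/halves_card: hAB => -> ->.
Qed.

Lemma total_mass_gt0 : 0 < total_mass R V l.
Proof.
have [B0 _ cardB0] : exists2 B0 : {set V}, B0 \subset setT & #|B0| = l2.
  by apply: exists_subset_of_card; rewrite cardsT cardV; lia.
rewrite /total_mass (bigD1 B0) /=; last by rewrite cardB0.
apply: ltr_pwDl; last by apply: sumr_ge0 => B _; rewrite -!natrM ler0n.
by rewrite -!natrM ltr0n !muln_gt0 bin_gt0; apply/and3P; split; lia.
Qed.

Lemma inside_disjoint (A B x y : {set V}) :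
  halves l A B -> inside l A x -> inside l B y -> [disjoint x & y].
Proof.
case/and3P => _ _ disjAB /andP[xA _] /andP[yB _].
by apply: (disjointWl xA); rewrite disjoint_sym; apply: (disjointWl yB); rewrite disjoint_sym.
Qed.

Lemma straddle_meet (A B x y : {set V}) :
  halves l A B -> straddle l A B x -> straddle l B A y -> ~~ [disjoint x & y].
Proof.
case/and3P => /eqP cardA /eqP cardB disjAB /and3P[xB _ xA] /and3P[yA _ yB].
have [v vx vNA] := subsetPn xA.
have [u uy uNB] := subsetPn yB.
have vNB : v \notin B by have := subsetP xB v vx; rewrite inE.
have uNA : u \notin A by have := subsetP yA u uy; rewrite inE.
have : #|~: (A :|: B)| == 1%N.
  rewrite cardsCs setCK cardV cardsU (disjoint_setI0 disjAB) cards0 cardA cardB.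
  by apply/eqP; lia.
case/cards1P => w ew.
have outside z : z \notin A -> z \notin B -> z = w.
  by move=> zNA zNB; apply/set1P; rewrite -ew !inE (negbTE zNA) (negbTE zNB).
have uv : u = v by rewrite (outside u uNA uNB) (outside v vNA vNB).
by apply/negP => disjxy; have := disjointFr disjxy vx; rewrite -uv uy.
Qed.

Section Skew.
Variable k : nat.
Hypotheses (k_gt0 : (0 < k)%N) (le_k_l : (300 * k <= l)%N).

Lemma decay_ge0 : 0 <= decay R k.
Proof. by apply: divr_ge0; apply: exprn_ge0; lra. Qed.

Lemma skew_bound_ge0 : 0 <= skew_bound R l k.
Proof.
apply: mulr_ge0; last exact: decay_ge0.
by apply: mulr_ge0; [lra | apply: exprn_ge0; lra].
Qed.

Section SkewedSide.
Variables (F : pred {set V}) (Q : {set V}).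
Hypothesis cardQ : #|Q| = l2.

Let U := ~: Q.
Let S := [set x : {set V} | [&& x \subset U, #|x| == l & F x]].
Let rare := [set i in U | 20 * #|[set x in S | i \in x]|%:R < 9 * #|S|%:R :> R].

Let cardU : #|U| = (2 * l)%N. Proof. exact: card_setC_half. Qed.

Lemma sum_halves_setD1 (g : {set V} -> R) :
  \sum_(P | halves l P Q) g P = \sum_(i in U) g (U :\ i).
Proof.
rewrite -sum_setD1 => [|]; last by rewrite cardU; lia.
by apply: eq_bigl => P; rewrite /halves cardQ cardU eqxx disjoints_subset.
Qed.

Lemma weight0_setD1 i : weight R l false F (U :\ i) Q = #|[set x in S | i \notin x]|%:R.
Proof.
rewrite /weight sumr1_card; congr (_%:R); apply: eq_card => x.
rewrite !inE /input /inside subsetD1.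
by case: (x \subset U); case: (i \in x); case: (#|x| == l); case: (F x).
Qed.

Lemma weight1_setD1 i : weight R l true F (U :\ i) Q = #|[set x in S | i \in x]|%:R.
Proof.
rewrite /weight sumr1_card; congr (_%:R); apply: eq_card => x.
rewrite !inE /input /straddle subsetD1 -/U.
by case: (x \subset U); case: (i \in x); case: (#|x| == l); case: (F x).
Qed.

Lemma weight01_setD1 i :
  weight R l false F (U :\ i) Q + weight R l true F (U :\ i) Q = #|S|%:R.
Proof.
rewrite weight0_setD1 weight1_setD1 -natrD; congr (_%:R).
rewrite -(cardsID [set x : {set V} | i \in x] S) addnC.
by congr (_ + _); apply: eq_card => x; rewrite !inE andbC.
Qed.

Lemma sum_weight0_halves : \sum_(P | halves l P Q) weight R l false F P Q = l%:R * #|S|%:R.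
Proof.
rewrite sum_halves_setD1; under eq_bigr do rewrite weight0_setD1 natr_card_sep.
rewrite exchange_big /= (eq_bigr (fun _ => l%:R)) => [|x xS].
  by rewrite sumr_const -(mulr_natr (l%:R : R)).
rewrite -natr_card_sep (_ : [set i in U | i \notin x] = U :\: x); last first.
  by apply/setP => i; rewrite !inE andbC.
move: xS; rewrite inE => /and3P[xU /eqP cardx _].
by rewrite cardsD (setIidPr xU) cardU cardx; congr (_%:R); lia.
Qed.

Lemma skewed_setD1 i : i \in U -> skewed R l F (U :\ i) Q = (i \in rare).
Proof. by move=> iU; rewrite /skewed weight01_setD1 weight1_setD1 inE iU. Qed.

Lemma card_family_le_skew_bound : (15 * k <= #|rare|)%N -> #|S|%:R <= skew_bound R l k.
Proof.
case/exists_subset_of_card => J Jrare cardJ.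
have JU : J \subset U by apply: subset_trans Jrare _; apply/subsetP => i; rewrite inE => /andP[].
rewrite /skew_bound /decay mulrA ler_pdivlMr; last by apply: exprn_gt0; lra.
apply: (card_rare_family_le JU cardJ k_gt0) cardU _ => [i iJ | x].
  by have := subsetP Jrare i iJ; rewrite inE => /andP[].
by rewrite inE => /and3P[].
Qed.

Lemma sum_skewed_weight0_le :
  \sum_(P | halves l P Q && skewed R l F P Q) weight R l false F P Q <=
  1/20 * \sum_(P | halves l P Q) weight R l false F P Q + l%:R * skew_bound R l k.
Proof.
rewrite sum_weight0_halves big_mkcondr /= sum_halves_setD1.
rewrite (eq_bigr (fun i => if i \in rare then weight R l false F (U :\ i) Q else 0)); last first.
  by move=> i iU; rewrite skewed_setD1.
rewrite -big_mkcondr /=.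
have w0_le_S i : weight R l false F (U :\ i) Q <= #|S|%:R.
  by rewrite -(weight01_setD1 i) lerDl weight_ge0.
have S0 : (0 : R) <= #|S|%:R by apply: ler0n.
have B0 := skew_bound_ge0.
(* Few rare points carry little weight; many force [S] to be small. *)
case: (ltnP #|rare| (15 * k)) => [few | many].
  have : \sum_(i in U | i \in rare) weight R l false F (U :\ i) Q <= #|rare|%:R * #|S|%:R.
    apply: (@le_trans _ _ (\sum_(i in rare) (#|S|%:R : R))); last by rewrite sumr_const mulr_natl.
    rewrite (eq_bigl (mem rare)) => [|i]; first exact: ler_sum.
    by apply: andb_idl; rewrite inE => /andP[].
  have : (20 * #|rare| <= l)%N by lia.
  rewrite -(ler_nat R) natrM => rare_le sum_le.
  have : 0 <= l%:R * skew_bound R l k by apply: mulr_ge0.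
  nra.
have SB := card_family_le_skew_bound many.
apply: (@le_trans _ _ (\sum_(i in U) weight R l false F (U :\ i) Q)).
  rewrite [X in _ <= X](bigID (mem rare)) /= lerDl.
  by apply: sumr_ge0 => i _; apply: weight_ge0.
rewrite -(sum_halves_setD1 (fun P => weight R l false F P Q)) sum_weight0_halves.
have : 0 <= 1/20 * (l%:R * (#|S|%:R : R)) by apply: mulr_ge0; [lra | apply: mulr_ge0].
have : (0 : R) <= l%:R by apply: ler0n.
nra.
Qed.

End SkewedSide.

Definition rect_error : R := l%:R * skew_bound R l k * \sum_(Q : {set V} | #|Q| == l2) c.

Lemma hsum_skewed_le (F G : pred {set V}) :
  hsum l (fun A B => if skewed R l F A B then
                       weight R l false F A B * weight R l false G B A else 0)
  <= 1/20 * hsum l (fun A B => weight R l false F A B * weight R l false G B A) + rect_error.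
Proof.
rewrite /hsum /rect_error exchange_big_rel [X in _ <= 1/20 * X + _]exchange_big_rel.
rewrite mulr_sumr [X in _ <= _ + X]mulr_sumr [X in _ <= _ + X]big_mkcond /= -big_split /=.
apply: ler_sum => Q _.
case: (boolP (#|Q| == l2)) => [/eqP cardQ | cardQ]; last first.
  have noA A : halves l A Q = false.
    by apply/negbTE; apply: contra cardQ => /halves_card[_ ->].
  by rewrite !big_pred0 // mulr0 addr0.
(* [weight false] does not depend on its last argument. *)
set wG := weight R l false G Q set0.
under eq_bigr do rewrite (_ : weight R l false G Q _ = wG) //.
under [X in _ <= _ * X + _]eq_bigr do rewrite (_ : weight R l false G Q _ = wG) //.
rewrite -big_mkcondr /= -!mulr_suml.
have skewed_le := sum_skewed_weight0_le F cardQ.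
have wG0 : 0 <= wG by apply: weight_ge0.
have wG_le : wG <= c by have := @weight0_le _ l R G Q set0; rewrite cardQ.
have : 0 <= \sum_(A | halves l A Q && skewed R l F A Q) weight R l false F A Q.
  by apply: sumr_ge0 => A _; apply: weight_ge0.
have : 0 <= l%:R * skew_bound R l k by apply: mulr_ge0; [apply: ler0n | apply: skew_bound_ge0].
nra.
Qed.

Lemma rectangle_bound (F G : pred {set V}) :
  729 * mass R l false (fun x y => F x && G y) <=
  1210 * mass R l true (fun x y => F x && G y) + 1620 * rect_error.
Proof.
rewrite !mass_rect.
set w0 := weight R l false; set w1 := weight R l true.
pose skewF A B := if skewed R l F A B then w0 F A B * w0 G B A else 0.
pose skewG A B := if skewed R l G B A then w0 G B A * w0 F A B else 0.
have pointwise : hsum l (fun A B => 81 * (w0 F A B * w0 G B A)) <=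
    hsum l (fun A B => 121 * (w1 F A B * w1 G B A) + 81 * (skewF A B + skewG A B)).
  apply: ler_hsum => A B _; apply: prod_le_unskewed; exact: weight_ge0.
rewrite hsumD !hsumZ hsumD in pointwise.
have boundF := hsum_skewed_le F G.
have boundG := hsum_skewed_le G F.
rewrite [in X in X <= _]hsum_swap [X in _ <= 1/20 * X + _]hsum_swap in boundG.
rewrite (eq_hsum l (fun A B => mulrC (w0 G B A) (w0 F A B))) in boundG.
rewrite -/w0 -/skewF -/skewG in boundF boundG pointwise.
lra.
Qed.

Lemma rect_error_ge0 : 0 <= rect_error.
Proof.
apply: mulr_ge0; last by apply: sumr_ge0 => Q _; apply: ler0n.
by apply: mulr_ge0; [apply: ler0n | apply: skew_bound_ge0].
Qed.

Lemma rect_error_le :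
  rect_error <= 28 * (2 * l).+1%:R * decay R k *
                total_mass R V l.
Proof.
have lR : (0 : R) < l%:R by rewrite ltr0n.
have c0 : (0 : R) <= c by apply: ler0n.
have exp4_le : l%:R * 4 ^+ l <= (2 * l).+1%:R * ((2 * l)%:R * c) :> R.
  have := exp4_leq_bin_central l; rewrite -(bin_predn_double l_gt0) -(ler_nat R).
  by rewrite natrX !natrM => le4; nra.
rewrite /rect_error /skew_bound.
have -> : total_mass R V l =
          (2 * l)%:R * c * \sum_(Q : {set V} | #|Q| == l2) c.
  by rewrite /total_mass mulr_sumr; apply: eq_bigr => B _; rewrite mulrA.
have : 0 <= 28 * decay R k * \sum_(Q : {set V} | #|Q| == l2) c.
  apply: mulr_ge0; last by apply: sumr_ge0 => Q _; apply: ler0n.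
  by apply: mulr_ge0; [lra | exact: decay_ge0].
have : (0 : R) <= 4 ^+ l by apply: exprn_ge0.
nra.
Qed.

Section Protocol.
Variables (X Y : Type) (gx : {set V} -> X) (gy : {set V} -> Y).

Definition run_rect (q : protocol X Y) (F G : pred {set V}) : rel {set V} :=
  fun x y => [&& F x, G y & run q (gx x) (gy y)].

Lemma mass_run_rectA e f (p0 p1 : protocol X Y) F G :
  mass R l e (run_rect (PAlice f p0 p1) F G) =
  mass R l e (run_rect p1 (fun x => F x && f (gx x)) G) +
  mass R l e (run_rect p0 (fun x => F x && ~~ f (gx x)) G).
Proof.
rewrite (mass_split l R e _ (fun x _ => f (gx x))) /run_rect /=.
congr (_ + _); apply: eq_mass => A B x y _ _ _;
  by case: (F x); case: (G y); case: (f (gx x)); rewrite /= ?andbT ?andbF.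
Qed.

Lemma mass_run_rectB e g (p0 p1 : protocol X Y) F G :
  mass R l e (run_rect (PBob g p0 p1) F G) =
  mass R l e (run_rect p1 F (fun y => G y && g (gy y))) +
  mass R l e (run_rect p0 F (fun y => G y && ~~ g (gy y))).
Proof.
rewrite (mass_split l R e _ (fun _ y => g (gy y))) /run_rect /=.
congr (_ + _); apply: eq_mass => A B x y _ _ _;
  by case: (F x); case: (G y); case: (g (gy y)); rewrite /= ?andbT ?andbF.
Qed.

Lemma protocol_bound (q : protocol X Y) (F G : pred {set V}) :
  729 * mass R l false (run_rect q F G) <=
  1210 * mass R l true (run_rect q F G) + 2 ^+ depth q * (1620 * rect_error).
Proof.
have err0 : 0 <= 1620 * rect_error by apply: mulr_ge0; [lra | apply: rect_error_ge0].
have pow_maxn_le a b : (2 ^+ a + 2 ^+ b) * (1620 * rect_error) <=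
    2 ^+ (maxn a b).+1 * (1620 * rect_error).
  apply: ler_wpM2r => //; rewrite exprS mulr2n mulrDl mul1r.
  by apply: lerD; apply: ler_weXn2l; rewrite ?leq_maxl ?leq_maxr //; lra.
elim: q F G => [b | f p0 IH0 p1 IH1 | g p0 IH0 p1 IH1] F G /=.
- case: b.
    rewrite expr0 mul1r !(@eq_mass _ _ _ _ (run_rect _ F G) (fun x y => F x && G y)).
    + exact: rectangle_bound.
    + by move=> *; rewrite /run_rect andbT.
    + by move=> *; rewrite /run_rect andbT.
  rewrite !(@eq_mass _ _ _ _ (run_rect _ F G) (fun _ _ => false)) ?mass0.
  + by rewrite !mulr0 add0r; apply: mulr_ge0 => //; apply: exprn_ge0.
  + by move=> *; rewrite /run_rect !andbF.
  + by move=> *; rewrite /run_rect !andbF.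
- rewrite !mass_run_rectA.
  have := IH1 (fun x => F x && f (gx x)) G; have := IH0 (fun x => F x && ~~ f (gx x)) G.
  have := pow_maxn_le (depth p0) (depth p1); lra.
- rewrite !mass_run_rectB.
  have := IH1 F (fun y => G y && g (gy y)); have := IH0 F (fun y => G y && ~~ g (gy y)).
  have := pow_maxn_le (depth p0) (depth p1); lra.
Qed.

End Protocol.
End Skew.
End Distribution.

Lemma ler_wsum_seq (R : numDomainType) (I : Type) (s : seq I) (w F : I -> R) (M : R) :
  all (fun i => 0 <= w i) s -> all (fun i => F i <= M) s ->
  \sum_(i <- s) w i * F i <= M * \sum_(i <- s) w i.
Proof.
elim: s => [|i s IHs] /=; first by rewrite !big_nil mulr0.
case/andP => wi0 w0 /andP[FiM FM]; rewrite !big_cons mulrDr.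
by apply: lerD; [rewrite mulrC ler_wpM2r | exact: IHs].
Qed.

Lemma depth_le_rcost (R : realType) X Y (P : rprotocol R X Y) :
  all (fun q => depth q.2 <= rcost P)%N P.
Proof.
rewrite /rcost; elim: P => //= q P IHP; rewrite big_cons leq_maxl /=.
by apply: sub_all IHP => q' /leq_trans; apply; apply: leq_maxr.
Qed.

Section Randomized.
Variables (R : realType) (V : finType) (l k : nat).
Hypotheses (l_gt0 : (0 < l)%N) (cardV : #|V| = (4 * l).-1).
Hypotheses (k_gt0 : (0 < k)%N) (le_k_l : (300 * k <= l)%N).
Variables (X Y : Type) (gx : {set V} -> X) (gy : {set V} -> Y) (fn : X -> Y -> bool).
Hypothesis fn_disjoint : forall x y : {set V}, fn (gx x) (gy y) = [disjoint x & y].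

Local Notation Z := (total_mass R V l).
Local Notation err := (1620 * rect_error R V l k).

Definition correct (q : protocol X Y) : rel {set V} :=
  fun x y => run q (gx x) (gy y) == fn (gx x) (gy y).

(* The weights 2/5, 3/5 are chosen so that the rectangle bound caps the success of a
   single protocol at 3863/6050 < 2/3 of the total mass, up to the error term. *)
Lemma correct_mass_le (q : protocol X Y) :
  6050 * (2/5 * mass R l false (correct q) + 3/5 * mass R l true (correct q)) <=
  3863 * Z + 3 * (2 ^+ depth q * err).
Proof.
set runq := run_rect gx gy q xpredT xpredT.
have mass0E : mass R l false (correct q) = mass R l false runq.
  apply: eq_mass => A B x y hAB xA yB.
  by rewrite /correct fn_disjoint (inside_disjoint hAB xA yB) /runq /run_rect; case: run.
have mass1E : mass R l true (correct q) = mass R l true (fun x y => ~~ runq x y).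
  apply: eq_mass => A B x y hAB xA yB.
  rewrite /correct fn_disjoint (negbTE (straddle_meet l_gt0 cardV hAB xA yB)).
  by rewrite /runq /run_rect; case: run.
have split e : Z = mass R l e runq + mass R l e (fun x y => ~~ runq x y).
  by rewrite -(massT R l_gt0 cardV e); exact: mass_split l R e _ runq.
have := split true; have := split false.
have := protocol_bound R l_gt0 cardV k_gt0 le_k_l gx gy q xpredT xpredT.
rewrite -/runq mass0E mass1E.
have := mass_ge0 l R false (fun x y => ~~ runq x y).
lra.
Qed.

Section Computing.
Variable P : rprotocol R X Y.
Hypothesis P_computes : rcomputes P fn.

Lemma mass_correct_ge e : 2/3 * Z <= \sum_(q <- P) q.1 * mass R l e (correct q.2).
Proof.
case: P_computes => _ succ.
rewrite (expect_sum l e P (fun q => q.1) (fun q x y => (correct q.2 x y)%:R)).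
rewrite -(massT R l_gt0 cardV e) -expect_const; apply: ler_expect => x y.
have := succ (gx x) (gy y); rewrite /success_prob big_mkcond /=.
congr (_ <= _); apply: eq_bigr => q _; rewrite /correct.
by case: (run q.2 _ _ == _); rewrite ?mulr1 ?mulr0.
Qed.

Lemma rcomputes_bound : 511 * Z <= 9 * (2 ^+ rcost P * err).
Proof.
case: P_computes => -[w_ge0 w_sum1] _.
pose W q := 2/5 * mass R l false (correct q) + 3/5 * mass R l true (correct q).
have avg : 2/3 * Z <= \sum_(q <- P) q.1 * W q.2.
  rewrite /W (eq_bigr (fun q => 2/5 * (q.1 * mass R l false (correct q.2)) +
                               3/5 * (q.1 * mass R l true (correct q.2)))); last first.
    by move=> q _; rewrite mulrDr [q.1 * (2/5 * _)]mulrCA [q.1 * (3/5 * _)]mulrCA.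
  rewrite big_split /= -[\sum_(q <- P) 2/5 * _]mulr_sumr.
  rewrite -[\sum_(q <- P) 3/5 * _]mulr_sumr.
  by have := mass_correct_ge false; have := mass_correct_ge true; lra.
have err0 : 0 <= err by apply: mulr_ge0; [lra | apply: rect_error_ge0].
have W_le : all (fun q => W q.2 <= (3863 * Z + 3 * (2 ^+ rcost P * err)) / 6050) P.
  apply: sub_all (depth_le_rcost P) => q le_depth.
  rewrite ler_pdivlMr; last by lra.
  rewrite mulrC; apply: le_trans (correct_mass_le q.2) _; rewrite lerD2l ler_pM2l //.
  by rewrite ler_wpM2r // ler_weXn2l //; lra.
have := ler_wsum_seq w_ge0 W_le; rewrite w_sum1 mulr1; lra.
Qed.

End Computing.

Lemma rcomputes_decay_bound (P : rprotocol R X Y) : rcomputes P fn ->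
  511 <= (9 * 1620 * 28) * 2 ^+ rcost P * (2 * l).+1%:R * decay R k.
Proof.
move=> P_computes; have := rcomputes_bound P_computes.
have Z_gt0 := total_mass_gt0 R l_gt0 cardV.
have := rect_error_le R V l_gt0 k.
have : 0 <= 2 ^+ rcost P :> R by apply: exprn_ge0.
set d := 2 ^+ _; set a := (2 * l).+1%:R; set E := rect_error _ _ _ _.
move=> d0 E_le bound.
rewrite -(ler_pM2r Z_gt0); apply: le_trans bound _.
have -> : 9 * 1620 * 28 * d * a * decay R k * Z = 9 * (d * (1620 * (28 * a * decay R k * Z))).
  by ring.
by rewrite ler_wpM2l // ler_wpM2l // ler_wpM2l.
Qed.

End Randomized.

Definition rank_of (n : nat) (key : 'I_n -> nat) (a : 'I_n) : nat :=
  #|[set b | (key b < key a)%N]|.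

Lemma rank_of_lt (n : nat) (key : 'I_n -> nat) (a : 'I_n) : (rank_of key a < n)%N.
Proof.
rewrite /rank_of -[X in (_ < X)%N](card_ord n) -cardsT.
by apply: proper_card; rewrite properE subsetT /=; apply/subsetPn; exists a; rewrite !inE ?ltnn.
Qed.

Lemma rank_of_mono (n : nat) (key : 'I_n -> nat) (a b : 'I_n) :
  (key a < key b)%N -> (rank_of key a < rank_of key b)%N.
Proof.
move=> lt_ab; apply: proper_card; rewrite properE; apply/andP; split.
  by apply/subsetP => z; rewrite !inE => /ltn_trans; apply.
by apply/subsetPn; exists a; rewrite !inE ?ltnn.
Qed.

Definition tier_key (n : nat) (tier : 'I_n -> nat) (a : 'I_n) : nat := (tier a * n + a)%N.

Lemma tier_key_inj (n : nat) (tier : 'I_n -> nat) : injective (tier_key tier).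
Proof.
move=> a b /(congr1 (modn^~ n)); rewrite /tier_key !modnMDl !modn_small //.
exact: val_inj.
Qed.

Lemma tier_rank_inj (n : nat) (tier : 'I_n -> nat) :
  injective (fun a => Ordinal (rank_of_lt (tier_key tier) a)).
Proof.
move=> a b /(congr1 val) /= eq_rank.
case: (ltngtP (tier_key tier a) (tier_key tier b)) => [lt_ab | lt_ba | ]; last exact: tier_key_inj.
- by have := rank_of_mono lt_ab; rewrite eq_rank ltnn.
- by have := rank_of_mono lt_ba; rewrite eq_rank ltnn.
Qed.

Definition tier_ranking (n : nat) (tier : 'I_n -> nat) : ranking n := perm (@tier_rank_inj n tier).

Lemma prefers_tier_ranking (n : nat) (tier : 'I_n -> nat) (a b : 'I_n) :
  prefers (tier_ranking tier) a b = (tier_key tier a < tier_key tier b)%N.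
Proof.
rewrite /prefers /tier_ranking !permE /=.
case: (ltngtP (tier_key tier a) (tier_key tier b)) => [lt_ab | lt_ba | eq_ab].
- by rewrite rank_of_mono.
- by apply/negbTE; rewrite -leqNgt ltnW // rank_of_mono.
- by rewrite (tier_key_inj eq_ab) ltnn.
Qed.

Lemma prefers_tier_ranking1 (n : nat) (tier : 'I_n -> nat) (a h : 'I_n) :
  tier h = 1%N -> (tier a == 1%N) = (a == h) -> (tier a <= 2)%N ->
  prefers (tier_ranking tier) a h = (tier a == 0%N).
Proof.
move=> tier_h tier_a1 tier_a2; rewrite prefers_tier_ranking /tier_key tier_h mul1n.
have := ltn_ord a; have := ltn_ord h.
case: (eqVneq a h) tier_a1 => [-> | _]; first by rewrite tier_h mul1n ltnn.
by move: tier_a2; case: (tier a) => [|[|[|//]]] //= _ _; lia.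
Qed.

(* For j < (m + 1) m, the pair of woman j / m and the (j mod m)-th man other than her
   husband. *)
Definition offdiag (m : nat) (mu : {perm 'I_m.+1}) (j : nat) : 'I_m.+1 * 'I_m.+1 :=
  let w : 'I_m.+1 := inord (j %/ m) in (w, inord (bump (mu w) (j %% m))).

Lemma bump_mod_lt (m : nat) (h : 'I_m.+1) (j : nat) : (0 < m)%N -> (bump h (j %% m) < m.+1)%N.
Proof.
by move=> m_gt0; have := ltn_pmod j m_gt0; have := ltn_ord h; rewrite /bump; case: leqP; lia.
Qed.

Lemma offdiag_neq_spouse (m : nat) (mu : {perm 'I_m.+1}) (j : nat) :
  (0 < m)%N -> (offdiag mu j).2 != mu (offdiag mu j).1.
Proof.
move=> m_gt0; apply/eqP => /(congr1 val) /=; rewrite inordK ?bump_mod_lt //.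
by move/eqP; rewrite eq_sym (negbTE (neq_bump _ _)).
Qed.

Lemma offdiag_inj (m : nat) (mu : {perm 'I_m.+1}) (j j' : nat) :
  (0 < m)%N -> (j < m.+1 * m)%N -> (j' < m.+1 * m)%N -> offdiag mu j = offdiag mu j' -> j = j'.
Proof.
move=> m_gt0 lt_j lt_j' eq_jj'.
have eq_div : (j %/ m = j' %/ m)%N.
  by have := congr1 (fun p => val p.1) eq_jj'; rewrite /offdiag /= !inordK // ltn_divLR.
have eq_mod : (j %% m = j' %% m)%N.
  have := congr1 (fun p => val p.2) eq_jj'; rewrite /offdiag /= !inordK ?bump_mod_lt //.
  by rewrite eq_div => /(congr1 (unbump (mu (inord (j' %/ m))))); rewrite !bumpK.
by rewrite (divn_eq j m) (divn_eq j' m) eq_div eq_mod.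
Qed.

Section Reduction.
Variables (m N : nat) (mu : marriage m.+1).
Hypotheses (m_gt0 : (0 < m)%N) (le_N : (N <= m.+1 * m)%N).

Definition selects (x : {set 'I_N}) (w a : 'I_m.+1) : bool :=
  [exists j : 'I_N, (j \in x) && (offdiag mu j == (w, a))].

Definition women_tier (x : {set 'I_N}) (w a : 'I_m.+1) : nat :=
  if selects x w a then 0 else if a == mu w then 1 else 2.

Definition men_tier (y : {set 'I_N}) (a w : 'I_m.+1) : nat :=
  if selects y w a then 0 else if w == (mu^-1)%g a then 1 else 2.

Definition women_of (x : {set 'I_N}) : women_profile m.+1 :=
  [ffun w => tier_ranking (women_tier x w)].

Definition men_of (y : {set 'I_N}) : men_profile m.+1 :=
  [ffun a => tier_ranking (men_tier y a)].

Lemma selects_neq_spouse x w a : selects x w a -> a != mu w.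
Proof.
by case/existsP => j /andP[_ /eqP eq_j]; have := offdiag_neq_spouse mu j m_gt0; rewrite eq_j.
Qed.

Lemma prefers_women_of x w a : prefers (women_of x w) a (mu w) = selects x w a.
Proof.
have notsel : selects x w (mu w) = false.
  by apply/negbTE/negP => /selects_neq_spouse; rewrite eqxx.
rewrite ffunE prefers_tier_ranking1 /women_tier.
- by case: ifP => //; case: ifP.
- by rewrite notsel eqxx.
- case: (boolP (selects x w a)) => [sel | _] /=; last by case: ifP.
  by rewrite (negbTE (selects_neq_spouse sel)).
- by case: ifP => //; case: ifP.
Qed.

Lemma prefers_men_of y w a : prefers (men_of y a) w ((mu^-1)%g a) = selects y w a.
Proof.
have notsel : selects y ((mu^-1)%g a) a = false.
  by apply/negbTE/negP => /selects_neq_spouse; rewrite permKV eqxx.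
rewrite ffunE prefers_tier_ranking1 /men_tier.
- by case: ifP => //; case: ifP.
- by rewrite notsel eqxx.
- case: (boolP (selects y w a)) => [sel | _] /=; last by case: ifP.
  suff /negbTE -> : w != (mu^-1)%g a by [].
  by apply: contra (selects_neq_spouse sel) => /eqP ->; rewrite permKV.
- by case: ifP => //; case: ifP.
Qed.

Lemma stable_encodingE x y : stable mu (women_of x) (men_of y) = [disjoint x & y].
Proof.
have blockingE w a : blocking mu (women_of x) (men_of y) w a = selects x w a && selects y w a.
  by rewrite /blocking prefers_women_of prefers_men_of.
apply/idP/idP => [st | disj].
  rewrite disjoints_subset; apply/subsetP => j jx; rewrite inE; apply/negP => jy.
  move/forallP: st => /(_ (offdiag mu j).1) /forallP /(_ (offdiag mu j).2).
  rewrite blockingE => /negP; apply; apply/andP; split; apply/existsP; exists j;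
  by rewrite ?jx ?jy -surjective_pairing eqxx.
apply/forallP => w; apply/forallP => a; rewrite blockingE.
apply/negP => /andP[/existsP[j /andP[jx /eqP eq_j]] /existsP[j' /andP[jy /eqP eq_j']]].
have eq_jj' : j = j'.
  apply: val_inj; apply: (@offdiag_inj m mu) => //; last by rewrite eq_j eq_j'.
  - exact: leq_trans (ltn_ord j) le_N.
  - exact: leq_trans (ltn_ord j') le_N.
by move: (disjointFr disj jx); rewrite eq_jj' jy.
Qed.

End Reduction.

Lemma decay_le_half_pow (R : realFieldType) (k : nat) : decay R (23 * k) <= (1/2) ^+ k.
Proof.
rewrite /decay.
have -> : (15 * (23 * k) = (15 * 23) * k)%N by lia.
have -> : (7 * (23 * k) = (7 * 23) * k)%N by lia.
rewrite !exprM -expr_div_n; apply: lerXn2r; rewrite ?nnegrE.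
- by apply: divr_ge0; apply: exprn_ge0; lra.
- lra.
- by rewrite ler_pdivrMr; [lra | apply: exprn_gt0; lra].
Qed.

Lemma exp2_half_pow_le (R : realFieldType) (a b : nat) :
  (a < b)%N -> 2 ^+ a * (1/2) ^+ b <= 1/2 :> R.
Proof.
move=> lt_ab; rewrite -(subnKC lt_ab) exprD exprSr !mulrA -exprMn.
rewrite (_ : 2 * (1/2) = 1 :> R) ?expr1n; last by lra.
have : (1/2 : R) ^+ (b - a.+1) <= 1 by apply: exprn_ile1; lra.
have : (0 : R) <= (1/2) ^+ (b - a.+1) by apply: exprn_ge0; lra.
lra.
Qed.

Lemma succ_double_le_exp4 (m l : nat) :
  (4 * l <= (m.+1 * m).+1)%N -> ((2 * l).+1 <= 2 ^ (2 * m.+1))%N.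
Proof.
move=> le_l; have -> : (2 ^ (2 * m.+1) = 2 ^ m.+1 * 2 ^ m.+1)%N by rewrite -expnD addnn mul2n.
have := ltn_mul (ltn_expl m.+1 (ltnSn 1)) (ltn_expl m.+1 (ltnSn 1)).
nia.
Qed.

(* Large constants are written as products: literals above 5000 are abstract for [lia]. *)
Lemma stable_rcost_ge (m : nat) (mu : marriage m.+1) (R : realType)
    (P : rprotocol R (women_profile m.+1) (men_profile m.+1)) :
  rcomputes P (fun PW PM => stable mu PW PM) ->
  ((m.+1 * m).+1 %/ 4 %/ (69 * 100) <= 19 + rcost P + 2 * m.+1)%N.
Proof.
set l := ((m.+1 * m).+1 %/ 4)%N; set k1 := (l %/ (69 * 100))%N => P_computes.
case: (posnP k1) => [-> // | k1_gt0].
have le_l : (4 * l <= (m.+1 * m).+1)%N by rewrite /l; lia.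
have l_gt0 : (0 < l)%N by rewrite /k1 in k1_gt0; lia.
have m_gt0 : (0 < m)%N by nia.
have le_N : ((4 * l).-1 <= m.+1 * m)%N by lia.
have k_gt0 : (0 < 23 * k1)%N by lia.
have le_k_l : (300 * (23 * k1) <= l)%N by rewrite /k1; lia.
have := rcomputes_decay_bound l_gt0 (card_ord _) k_gt0 le_k_l
  (stable_encodingE mu m_gt0 le_N) P_computes.
have := decay_le_half_pow R k1.
have := succ_double_le_exp4 le_l; rewrite -(ler_nat R) natrX => le_exp.
set d := rcost P => le_decay bound.
rewrite leqNgt; apply/negP => /(exp2_half_pow_le R).
suff : 511 <= 2 ^+ (19 + d + 2 * m.+1) * (1/2) ^+ k1 :> R by lra.
apply: le_trans bound _; rewrite !exprD.
have := decay_ge0 R (23 * k1); have : (0 : R) <= 2 ^+ d by apply: exprn_ge0.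
have : (9 * 1620 * 28 : R) <= 2 ^+ 19 by lra.
move=> le19 d0 dec0; apply: ler_pM => //.
- by rewrite !mulr_ge0 //; lra.
- apply: ler_pM => //; first by apply: mulr_ge0 => //; lra.
  exact: ler_wpM2r.
Qed.

Local Close Scope ring_scope.

Theorem corollary10 :
  exists k N : nat, 0 < k /\
    forall (n : nat), N <= n ->
    forall (mu : marriage n) (R : realType)
           (P : rprotocol R (women_profile n) (men_profile n)),
      rcomputes P (fun PW PM => stable mu PW PM) ->
      n ^ 2 <= k * rcost P.
Proof.
exists (552 * 100), (120 * 1000); split => // -[|m] le_n mu R P P_computes; first by [].
have := stable_rcost_ge P_computes; nia.
Qed.
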